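(* Let $G=(V,E,w)$ be a connected weighted graph with $n$ vertices, let $e\in E$, and let $k\in\mathbb{R}$. Then $$ \sum_{\{s,t\}\subseteq V}\Big((\widetilde\partial 1_e)^{T}(L^{+})^{k}(1_s-1_t)\Big)^{2}=n\cdot w_e\cdot\big(H^{(2k)}_{e}\big)^{2}, $$ where the sum is over unordered pairs of distinct vertices.
   Context: $G=(V,E,w)$ is undirected with positive edge weights. Each edge is given an arbitrary fixed orientation; the boundary matrix $\partial\in\mathbb{R}^{|V|\times|E|}$ has column $\partial 1_e=1_s-1_t$ for $e=(s,t)$, where $1_x$ is the indicator vector of $x$. $W$ is the diagonal weight matrix, $\widetilde\partial=\partial W^{1/2}$, and $L=\widetilde\partial\widetilde\partial^{T}$ is the graph Laplacian with spectral decomposition $L=\sum_i\lambda_i x_ix_i^{T}$. For $k\in\mathbb{R}$, $(L^{+})^{k}:=\sum_{i:\lambda_i>0}\lambda_i^{-k}x_ix_i^{T}$ (so $(L^+)^0$ is the orthogonal projection onto $\mathrm{im}(L)$). The $k$-harmonic distance is $H^{(k)}_{st}=\sqrt{(1_s-1_t)^{T}(L^{+})^{k}(1_s-1_t)}$, and $H^{(k)}_e:=H^{(k)}_{st}$ for $e=\{s,t\}$. *)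

From HB Require Import structures.
From mathcomp Require Import all_boot all_order all_algebra.
From mathcomp Require Import reals exp.
Set Implicit Arguments. Unset Strict Implicit. Unset Printing Implicit Defensive.
Import Order.TTheory GRing.Theory Num.Theory.
Local Open Scope ring_scope.

(* A weighted graph on vertex set 'I_n with m edges; edge j : 'I_m has a
   fixed orientation (src j, tgt j) and weight w j. *)
Section Graph.
Variables (R : realType) (n m : nat).
Variables (src tgt : 'I_m -> 'I_n) (w : 'I_m -> R).

Definition simple_weighted_graph : Prop :=
  (forall j, src j != tgt j) /\
  (forall j1 j2, j1 != j2 -> [set src j1; tgt j1] != [set src j2; tgt j2]) /\
  (forall j, 0 < w j).

Definition adj : rel 'I_n := fun u v =>
  [exists j, ((src j == u) && (tgt j == v)) || ((src j == v) && (tgt j == u))].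

Definition connected_graph : Prop := forall u v : 'I_n, connect adj u v.

Definition boundary : 'M[R]_(n, m) :=
  \matrix_(i, j) (((i == src j)%:R : R) - (i == tgt j)%:R).

Definition wboundary : 'M[R]_(n, m) :=
  boundary *m diag_mx (\row_j Num.sqrt (w j)).

Definition laplacian : 'M[R]_n := wboundary *m wboundary^T.
End Graph.

Definition ind (R : realType) (p : nat) (x : 'I_p) : 'cV[R]_p := delta_mx x 0.

Definition chi (R : realType) (n : nat) (s t : 'I_n) : 'cV[R]_n :=
  ind R s - ind R t.

Definition spectral_decomposition (R : realType) (n : nat)
    (L : 'M[R]_n) (lam : 'I_n -> R) (X : 'M[R]_n) : Prop :=
  X^T *m X = 1%:M /\
  L = \sum_i lam i *: (col i X *m (col i X)^T).

Definition pinv_pow (R : realType) (n : nat) (lam : 'I_n -> R) (X : 'M[R]_n)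
    (k : R) : 'M[R]_n :=
  \sum_(i | 0 < lam i) (lam i `^ (- k)) *: (col i X *m (col i X)^T).

Definition harmonic_dist (R : realType) (n : nat) (lam : 'I_n -> R)
    (X : 'M[R]_n) (k : R) (s t : 'I_n) : R :=
  Num.sqrt (((chi R s t)^T *m pinv_pow lam X k *m chi R s t) 0 0).

From HB Require Import structures.
From mathcomp Require Import all_boot all_order all_algebra.
From mathcomp Require Import reals exp ring.
Set Implicit Arguments. Unset Strict Implicit. Unset Printing Implicit Defensive.
Import Order.TTheory GRing.Theory Num.Theory.
Local Open Scope ring_scope.

(* For e = {a, b} and u := (w_e^(1/2) (1_a - 1_b))^T (L^+)^k the summand at {s, t}
   is (u_s - u_t)^2, so Lagrange's identity turns the sum over pairs into n * sum_s u_s^2 - (sum_s u_s)^2.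
   The second term vanishes: (L^+)^k only involves eigenvectors of positive
   eigenvalue, which are orthogonal to the all-ones vector in the kernel of L.
   The first is n * u u^T, and since the spectral powers are symmetric and
   multiply by adding exponents, u u^T = w_e (1_a - 1_b)^T (L^+)^(2k) (1_a - 1_b). *)

Lemma sumr_pairs_sym (V : nmodType) (n : nat) (F : 'I_n -> 'I_n -> V) :
    (forall s t, F s t = F t s) -> (forall s, F s s = 0) ->
  \sum_s \sum_t F s t = (\sum_(s < n) \sum_(t < n | (s < t)%N) F s t) *+ 2.
Proof.
move=> Fsym Fdiag.
have lt_gt : \sum_(s < n) \sum_(t < n | (s < t)%N) F s t
             = \sum_(s < n) \sum_(t < n | (t < s)%N) F s t.
  rewrite (exchange_big_dep predT) //=.
  by apply: eq_bigr => s _; apply: eq_bigr => t _; rewrite Fsym.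
rewrite mulr2n {2}lt_gt -big_split /=; apply: eq_bigr => s _.
rewrite (bigID (fun t : 'I_n => (s < t)%N) predT) /=; congr (_ + _).
rewrite (bigD1 s) ?ltnn //= Fdiag add0r; apply: eq_bigl => t.
by rewrite -leqNgt ltn_neqAle andbC.
Qed.

Lemma sumr_pairs_sqrB (R : numDomainType) (n : nat) (u : 'I_n -> R) :
  \sum_(s < n) \sum_(t < n | (s < t)%N) (u s - u t) ^+ 2
    = n%:R * \sum_s u s ^+ 2 - (\sum_s u s) ^+ 2.
Proof.
apply: (@pmulrnI _ 2) => //; rewrite -sumr_pairs_sym; last 2 first.
- by move=> s t; rewrite -opprB sqrrN.
- by move=> s; rewrite subrr expr0n.
transitivity (\sum_s (u s ^+ 2 *+ n + \sum_t u t ^+ 2 - (u s * \sum_t u t) *+ 2)).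
  apply: eq_bigr => s _; rewrite mulr_sumr -sumrMnl.
  have -> : u s ^+ 2 *+ n = \sum_(t < n) u s ^+ 2 by rewrite sumr_const card_ord.
  by rewrite -!big_split -sumrB; apply: eq_bigr => t _; rewrite sqrrB addrAC.
by rewrite sumrB big_split /= sumr_const card_ord !sumrMnl -mulr_suml -expr2; ring.
Qed.

Section SpectralCalculus.
Variables (R : comPzRingType) (n : nat) (X : 'M[R]_n).
Hypothesis X_orthonormal : X^T *m X = 1%:M.

Definition spectral_sum (I : pred 'I_n) (f : 'I_n -> R) : 'M[R]_n :=
  \sum_(i | I i) f i *: (col i X *m (col i X)^T).

Lemma tr_col_mul_col i j : (col i X)^T *m col j X = (i == j)%:R%:M.
Proof.
apply/matrixP => a b; rewrite !ord1 !mxE eqxx mulr1n.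
have := congr1 (fun M : 'M[R]_n => M i j) X_orthonormal; rewrite !mxE => <-.
by apply: eq_bigr => l _; rewrite !mxE.
Qed.

Lemma spectral_sum_mul_col I f j :
  spectral_sum I f *m col j X = if I j then f j *: col j X else 0.
Proof.
rewrite mulmx_suml.
have term i : f i *: (col i X *m (col i X)^T) *m col j X = (i == j)%:R * f i *: col j X.
  rewrite -scalemxAl -mulmxA tr_col_mul_col mul_mx_scalar scalerA mulrC.
  by case: eqP => [-> | _]; rewrite // !mul0r !scale0r.
under eq_bigr do rewrite term.
case: ifP => Ij; first by rewrite (bigD1 j) //= big1 => [|i /andP [_ /negbTE ->]];
  rewrite ?eqxx ?mul1r ?mul0r ?scale0r ?addr0.
by rewrite big1 // => i Ii; case: eqP Ii => [-> | _]; rewrite ?Ij // mul0r scale0r.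
Qed.

Lemma spectral_sum_mul I f g :
  spectral_sum I f *m spectral_sum I g = spectral_sum I (fun i => f i * g i).
Proof.
rewrite {2}/spectral_sum mulmx_sumr; apply: eq_bigr => i Ii.
by rewrite -scalemxAr mulmxA spectral_sum_mul_col Ii -scalemxAl scalerA mulrC.
Qed.

Lemma tr_spectral_sum I f : (spectral_sum I f)^T = spectral_sum I f.
Proof.
by rewrite linear_sum; apply: eq_bigr => i _; rewrite linearZ /= trmx_mul trmxK.
Qed.

End SpectralCalculus.

Lemma spectral_sum_mul_ker (R : idomainType) (n : nat) (L X : 'M[R]_n)
    (lam : 'I_n -> R) (I : pred 'I_n) (f : 'I_n -> R) (c : 'cV[R]_n) :
    X^T *m X = 1%:M -> L = spectral_sum X predT lam -> L *m c = 0 ->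
    (forall i, I i -> lam i != 0) ->
  spectral_sum X I f *m c = 0.
Proof.
move=> X_orth -> Lc lam_neq0; rewrite mulmx_suml big1 // => i Ii.
suff xc : (col i X)^T *m c = 0 by rewrite -scalemxAl -mulmxA xc mulmx0 scaler0.
have : (col i X)^T *m (spectral_sum X predT lam *m c) = lam i *: ((col i X)^T *m c).
  rewrite mulmxA -[(col i X)^T *m _]trmxK trmx_mul tr_spectral_sum // trmxK.
  by rewrite spectral_sum_mul_col //= linearZ /= scalemxAl.
by rewrite Lc mulmx0 => /esym/eqP; rewrite scalemx_eq0 (negbTE (lam_neq0 i Ii)) => /eqP.
Qed.

Section RowVectors.
Variables (R : comPzRingType) (n : nat) (u : 'rV[R]_n).

Lemma mul_rV_const1 : (u *m (const_mx 1 : 'cV_n)) 0 0 = \sum_s u 0 s.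
Proof. by rewrite mxE; apply: eq_bigr => s _; rewrite mxE mulr1. Qed.

Lemma mul_rV_tr : (u *m u^T) 0 0 = \sum_s u 0 s ^+ 2.
Proof. by rewrite mxE; apply: eq_bigr => s _; rewrite mxE expr2. Qed.

End RowVectors.

Lemma mul_rV_chi (R : realType) (n : nat) (u : 'rV[R]_n) (s t : 'I_n) :
  (u *m chi R s t) 0 0 = u 0 s - u 0 t.
Proof. by rewrite mulmxBr -!colE !mxE. Qed.

Section PseudoinversePowers.
Variables (R : realType) (n : nat) (lam : 'I_n -> R) (X : 'M[R]_n).
Hypothesis X_orthonormal : X^T *m X = 1%:M.

Lemma pinv_powE k :
  pinv_pow lam X k = spectral_sum X (fun i => 0 < lam i) (fun i => lam i `^ (- k)).
Proof. by []. Qed.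

Lemma pinv_pow_mul k1 k2 :
  pinv_pow lam X k1 *m pinv_pow lam X k2 = pinv_pow lam X (k1 + k2).
Proof.
rewrite !pinv_powE spectral_sum_mul //; apply: eq_bigr => i lam_gt0.
by rewrite opprD powRD // lt0r_neq0 ?implybT.
Qed.

Lemma tr_pinv_pow k : (pinv_pow lam X k)^T = pinv_pow lam X k.
Proof. exact: tr_spectral_sum. Qed.

Lemma pinv_pow_form_ge0 k (c : 'cV[R]_n) : 0 <= (c^T *m pinv_pow lam X k *m c) 0 0.
Proof.
rewrite (splitr k) -pinv_pow_mul -{2}[pinv_pow lam X _]tr_pinv_pow.
set P := pinv_pow lam X _.
have -> : c^T *m (P *m P^T) *m c = (c^T *m P) *m (c^T *m P)^T.
  by rewrite trmx_mul trmxK !mulmxA.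
by rewrite mul_rV_tr; apply: sumr_ge0 => s _; apply: sqr_ge0.
Qed.

Lemma harmonic_dist_sqr k s t :
  harmonic_dist lam X k s t ^+ 2 = ((chi R s t)^T *m pinv_pow lam X k *m chi R s t) 0 0.
Proof. by rewrite sqr_sqrtr // pinv_pow_form_ge0. Qed.

Lemma pinv_pow_mul_ker (L : 'M[R]_n) k (c : 'cV[R]_n) :
  spectral_decomposition L lam X -> L *m c = 0 -> pinv_pow lam X k *m c = 0.
Proof.
move=> [X_orth L_spec] Lc; rewrite pinv_powE.
apply: (spectral_sum_mul_ker _ X_orth L_spec Lc) => i; exact: lt0r_neq0.
Qed.

End PseudoinversePowers.

Section GraphMatrices.
Variables (R : realType) (n m : nat) (src tgt : 'I_m -> 'I_n) (w : 'I_m -> R).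

Lemma col_boundary j : col j (boundary R src tgt) = chi R (src j) (tgt j).
Proof. by apply/matrixP => i a; rewrite !mxE ord1 !andbT. Qed.

Lemma tr_boundary_mul_const1 :
  (boundary R src tgt)^T *m (const_mx 1 : 'cV[R]_n) = 0.
Proof.
apply/row_matrixP => j; rewrite row_mul -tr_col col_boundary row0 linearB /=.
by rewrite mulmxBl !trmx_delta -!rowE !row_const subrr.
Qed.

Lemma laplacian_mul_const1 : laplacian src tgt w *m (const_mx 1 : 'cV[R]_n) = 0.
Proof.
by rewrite -mulmxA trmx_mul -mulmxA -mulmxA tr_boundary_mul_const1 !mulmx0.
Qed.

Lemma wboundary_ind e :
  wboundary src tgt w *m ind R e = Num.sqrt (w e) *: chi R (src e) (tgt e).
Proof.
apply/matrixP => i a; rewrite /wboundary /ind -colE mul_mx_diag !mxE ord1 eqxx !andbT.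
by rewrite mulrC.
Qed.

End GraphMatrices.

Theorem theorem6p1 (R : realType) (n m : nat)
    (src tgt : 'I_m -> 'I_n) (w : 'I_m -> R)
    (lam : 'I_n -> R) (X : 'M[R]_n) (e : 'I_m) (k : R) :
  simple_weighted_graph src tgt w ->
  connected_graph src tgt ->
  spectral_decomposition (laplacian src tgt w) lam X ->
  \sum_(s < n) \sum_(t < n | (s < t)%N)
     (((wboundary src tgt w *m ind R e)^T *m pinv_pow lam X k *m chi R s t) 0 0) ^+ 2
  = n%:R * w e * (harmonic_dist lam X (2 * k) (src e) (tgt e)) ^+ 2.
Proof.
move=> [_ [_ w_gt0]] _ spec; have [X_orth _] := spec.
rewrite wboundary_ind; set c := chi R (src e) (tgt e).
set u := _ *m pinv_pow lam X k.
under eq_bigr do under eq_bigr do rewrite mul_rV_chi.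
rewrite sumr_pairs_sqrB -mul_rV_const1 -mul_rV_tr.
have -> : u *m (const_mx 1 : 'cV_n) = 0.
  by rewrite -mulmxA (pinv_pow_mul_ker k spec (laplacian_mul_const1 _ _ _)) mulmx0.
have -> : u *m u^T = w e *: (c^T *m pinv_pow lam X (2 * k) *m c).
  rewrite /u trmx_mul tr_pinv_pow trmxK mulmxA -(mulmxA _ _ (pinv_pow _ _ _)) pinv_pow_mul //.
  by rewrite !linearZ /= -!scalemxAl scalerA -expr2 sqr_sqrtr ?ltW // mulr_natl mulr2n.
by rewrite harmonic_dist_sqr // !mxE expr0n /= subr0 mulrA.
Qed.
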